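(* Let $\mathcal{A}\in\mathbb{C}^{n\times n\times n\times n}$ be a CPS tensor with orthogonal matrix decomposition $\mathcal{A}=\sum_{i=1}^r\lambda_iE_i\otimes\bar E_i$, where $r=rank_m(\mathcal{A})$, $0\ne\lambda_i\in\mathbb{R}$, $E_i$ complex symmetric, $\langle E_i,E_j\rangle=\delta_{ij}$. Then: (1) if every $E_i$ has rank one, then $\mathcal{A}=\sum_{i=1}^r\lambda_i' p_i\otimes p_i\otimes\bar p_i\otimes\bar p_i$ for some $\lambda_i'\in\mathbb{R}$, $p_i\in\mathbb{C}^n$ with $p_i^Hp_j=0$ for all $i\neq j$; (2) if $R=\max_i\operatorname{rank}(E_i)$, then $r\le\operatorname{rank}(\mathcal{A})\le rR^2$; (3) if $r=1$, i.e. $\mathcal{A}=\lambda E\otimes\bar E$ with $\lambda\ne0$, and $\operatorname{rank}(E)=R$, then $\operatorname{rank}(\mathcal{A})=R^2$. Here $\operatorname{rank}(\mathcal{A})$ denotes the CP rank over $\mathbb{C}$.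
   Context: A tensor $\mathcal{A}\in\mathbb{C}^{n\times n\times n\times n}$ is conjugate partial-symmetric (CPS) if $\mathcal{A}_{ijkl}=\overline{\mathcal{A}_{klij}}$ and $\mathcal{A}_{ijkl}=\mathcal{A}_{jikl}=\mathcal{A}_{ijlk}$ for all indices. For $E,F\in\mathbb{C}^{n\times n}$, $(E\otimes F)_{ijkl}=E_{ij}F_{kl}$; $\langle X,Y\rangle=\sum_{ij}X_{ij}\overline{Y_{ij}}$. $rank_m(\mathcal{A})=\min\{r:\mathcal{A}=\sum_{i=1}^r\lambda_iE_i\otimes\bar E_i,\ \lambda_i\in\mathbb{R},\ E_i=E_i^T\in\mathbb{C}^{n\times n}\}$. The CP rank $\operatorname{rank}(\mathcal{A})$ is the smallest $r$ with $\mathcal{A}=\sum_{i=1}^r u_i^1\otimes u_i^2\otimes u_i^3\otimes u_i^4$, $u_i^j\in\mathbb{C}^n$, where $(u\otimes v\otimes w\otimes z)_{ijkl}=u_iv_jw_kz_l$. *)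

From mathcomp Require Import all_boot all_order all_algebra.
From mathcomp Require Import complex.
Set Implicit Arguments. Unset Strict Implicit. Unset Printing Implicit Defensive.
Import Order.TTheory GRing.Theory Num.Theory.
Local Open Scope ring_scope.

(* Complex numbers are modelled as R[i] = complex R for a real closed field R
   (R = the reals gives C). *)

Definition tensor4 (K : Type) (n : nat) := 'I_n -> 'I_n -> 'I_n -> 'I_n -> K.

Section Defs.
Variable R : rcfType.
Local Notation C := (R[i]).

Definition CPS (n : nat) (A : tensor4 C n) : Prop :=
  forall i j k l,
    A i j k l = (A k l i j)^* /\ A i j k l = A j i k l /\ A i j k l = A i j l k.

Definition cmxconj (n : nat) (E : 'M[C]_n) : 'M[C]_n := map_mx Num.conj E.

Definition mxtens4 (n : nat) (E F : 'M[C]_n) : tensor4 C n :=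
  fun i j k l => E i j * F k l.

Definition mxinner (n : nat) (X Y : 'M[C]_n) : C :=
  \sum_(i < n) \sum_(j < n) X i j * (Y i j)^*.

Definition m_decomp (n r : nat) (A : tensor4 C n) : Prop :=
  exists (lam : 'I_r -> C) (E : 'I_r -> 'M[C]_n),
    (forall t, lam t \is Num.real) /\ (forall t, (E t)^T = E t) /\
    (forall i j k l, A i j k l = \sum_(t < r) lam t * mxtens4 (E t) (cmxconj (E t)) i j k l).

Definition is_rank_m (n : nat) (A : tensor4 C n) (r : nat) : Prop :=
  m_decomp r A /\ forall r', m_decomp r' A -> (r <= r')%N.

Definition vtens4 (n : nat) (u v w z : 'I_n -> C) : tensor4 C n :=
  fun i j k l => u i * v j * w k * z l.

Definition cp_decomp (n r : nat) (A : tensor4 C n) : Prop :=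
  exists u1 u2 u3 u4 : 'I_r -> 'I_n -> C,
    forall i j k l, A i j k l = \sum_(t < r) vtens4 (u1 t) (u2 t) (u3 t) (u4 t) i j k l.

Definition is_cp_rank (n : nat) (A : tensor4 C n) (k : nat) : Prop :=
  cp_decomp k A /\ forall k', cp_decomp k' A -> (k <= k')%N.

End Defs.

From mathcomp Require Import all_boot all_order all_algebra.
From mathcomp Require Import complex ring.
From Stdlib Require Import Classical Wf_nat.
Import Order.TTheory GRing.Theory Num.Theory.
Local Open Scope ring_scope.
Set Implicit Arguments. Unset Strict Implicit.

(* Contracting A against test matrices W, W' on the index pairs ij and kl turns
   a CP decomposition with k terms into a sum of k products.  So if the
   contractions against two families indexed by T form an identity matrix, the
   #|T| x #|T| identity factors through C^k and #|T| <= k.  Orthonormality of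
   the E_t gives such families of size r (W_s = conj(E_s) / lam_s, W'_t = E_t).
   For r = 1, exchanging the two middle modes turns A into lam times the
   Kronecker product of E and conj(E), and base matrices with P E Q = 1 give
   families of size R^2.  Conversely, E_t = U_t V_t with inner dimension R
   expands each E_t (x) conj(E_t) into R^2 rank-one terms.  Finally, a symmetric
   rank-one E_t is a_t v_t v_t^T, so E_t (x) conj(E_t) is
   |a_t|^2 v_t (x) v_t (x) conj(v_t) (x) conj(v_t), and
   <E_s, E_t> = a_s conj(a_t) (v_s^T conj(v_t))^2 forces the orthogonality. *)

Lemma sum_prod3 (V : nmodType) (I J K : finType) (F : I -> J -> K -> V) :
  \sum_i \sum_j \sum_k F i j k = \sum_(x : I * J * K) F x.1.1 x.1.2 x.2.
Proof.
by rewrite (pair_bigA _ (fun i j => \sum_k F i j k)) (pair_bigA _ (fun p k => F p.1 p.2 k)).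
Qed.

Section MatrixFacts.
Variable F : fieldType.

Lemma card_leq_factor_id (T : finType) (k : nat) (a : T -> 'I_k -> F) (b : 'I_k -> T -> F) :
  (forall x y, \sum_(t < k) a x t * b t y = (x == y)%:R) -> (#|T| <= k)%N.
Proof.
move=> ab1.
pose M1 : 'M[F]_(#|T|, k) := \matrix_(i, t) a (enum_val i) t.
pose M2 : 'M[F]_(k, #|T|) := \matrix_(t, j) b t (enum_val j).
have M12 : M1 *m M2 = 1%:M.
  apply/matrixP=> i j; rewrite !mxE.
  under eq_bigr do rewrite !mxE.
  by rewrite ab1 (inj_eq enum_val_inj).
rewrite -[X in (X <= _)%N](mxrank1 F #|T|) -M12.
exact: leq_trans (mxrankM_maxl _ _) (rank_leq_col _).
Qed.

Lemma mulmx_ebase_pid m p q (E : 'M[F]_(m, q)) : (\rank E <= p)%N ->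
  (col_ebase E *m pid_mx (\rank E) : 'M_(m, p)) *m (pid_mx (\rank E) *m row_ebase E) = E.
Proof.
move=> rkE; rewrite mulmxA -[_ *m pid_mx _ *m pid_mx _]mulmxA pid_mx_id //.
exact: mulmx_ebase.
Qed.

Lemma sym_rank1_mx n (E : 'M[F]_n) : E^T = E -> \rank E = 1%N ->
  {a : F & {v : 'I_n -> F | forall i j, E i j = a * v i * v j}}.
Proof.
move=> symE rkE; have EUV := mulmx_ebase_pid (eq_leq rkE).
pose u i : F := (col_ebase E *m pid_mx (\rank E) : 'M_(n, 1)) i 0.
pose v j : F := (pid_mx (\rank E) *m row_ebase E : 'M_(1, n)) 0 j.
have Euv i j : E i j = u i * v j by rewrite -{1}EUV mxE big_ord1.
exists (if [pick j | v j != 0] is Some j0 then u j0 / v j0 else 0), v => i j.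
case: pickP => [j0 vj0 | v0]; last first.
  by move/negbFE/eqP: (v0 j); rewrite Euv => ->; rewrite !mulr0.
have uv : u i * v j0 = u j0 * v i.
  by rewrite -!Euv -{1}symE mxE.
by rewrite Euv -[u i](mulfK vj0) uv; ring.
Qed.

End MatrixFacts.

Section Contraction.
Variable R : rcfType.
Local Notation C := (R[i]).
Variable n : nat.
Implicit Types (A B : tensor4 C n) (W X Y : 'M[C]_n).

Definition mxpair (W X : 'M[C]_n) : C := \sum_(i < n) \sum_(j < n) W i j * X i j.

Definition r1mx (f g : 'I_n -> C) : 'M[C]_n := \matrix_(i, j) (f i * g j).

Lemma mxpairZl c W X : mxpair (c *: W) X = c * mxpair W X.
Proof.
rewrite /mxpair big_distrr; apply: eq_bigr => i _.
by rewrite big_distrr; apply: eq_bigr => j _; rewrite mxE -mulrA.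
Qed.

Lemma mxpair_conjl X Y : mxpair (cmxconj Y) X = mxinner X Y.
Proof. by apply: eq_bigr => i _; apply: eq_bigr => j _; rewrite mxE mulrC. Qed.

Lemma mxpair_conjr X Y : mxpair X (cmxconj Y) = mxinner X Y.
Proof. by apply: eq_bigr => i _; apply: eq_bigr => j _; rewrite mxE. Qed.

Lemma mxpair_r1mx f g X : mxpair (r1mx f g) X = \sum_(i < n) \sum_(j < n) f i * X i j * g j.
Proof. by apply: eq_bigr => i _; apply: eq_bigr => j _; rewrite mxE; ring. Qed.

Lemma mxpair_r1mx_mulmx m (P : 'M[C]_(m, n)) (Q : 'M[C]_(n, m)) X a b :
  mxpair (r1mx (fun i => P a i) (fun j => Q j b)) X = (P *m X *m Q) a b.
Proof.
rewrite mxpair_r1mx !mxE exchange_big; apply: eq_bigr => j _.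
by rewrite mxE big_distrl.
Qed.

Lemma mxpair_r1mx_conj f g X :
  mxpair (r1mx (fun i => (f i)^*) (fun j => (g j)^*)) (cmxconj X) = (mxpair (r1mx f g) X)^*.
Proof.
rewrite !mxpair_r1mx rmorph_sum; apply: eq_bigr => i _.
by rewrite rmorph_sum; apply: eq_bigr => j _; rewrite mxE !rmorphM.
Qed.

Definition contract (A : tensor4 C n) (W W' : 'M[C]_n) : C :=
  \sum_(i < n) \sum_(j < n) \sum_(k < n) \sum_(l < n) W i j * W' k l * A i j k l.

Lemma eq_contract A B W W' : (forall i j k l, A i j k l = B i j k l) ->
  contract A W W' = contract B W W'.
Proof.
move=> AB; do 3 (apply: eq_bigr => ? _); by apply: eq_bigr => l _; rewrite AB.
Qed.

Lemma contract_sum (I : finType) (A : I -> tensor4 C n) W W' :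
  contract (fun i j k l => \sum_(x : I) A x i j k l) W W' = \sum_(x : I) contract (A x) W W'.
Proof.
rewrite /contract; symmetry.
do 4 (rewrite exchange_big; apply: eq_bigr => ? _).
by rewrite big_distrr.
Qed.

Lemma contractZ c A W W' :
  contract (fun i j k l => c * A i j k l) W W' = c * contract A W W'.
Proof.
rewrite /contract; do 4 (rewrite big_distrr; apply: eq_bigr => ? _).
by rewrite mulrCA.
Qed.

Lemma contract_mxtens4 X Y W W' : contract (mxtens4 X Y) W W' = mxpair W X * mxpair W' Y.
Proof.
rewrite /contract /mxpair big_distrl; apply: eq_bigr => i _.
rewrite big_distrl; apply: eq_bigr => j _.
rewrite big_distrr; apply: eq_bigr => k _.
by rewrite big_distrr; apply: eq_bigr => l _; rewrite /mxtens4 /=; ring.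
Qed.

Lemma contract_cp m A (u1 u2 u3 u4 : 'I_m -> 'I_n -> C) W W' :
  (forall i j k l, A i j k l = \sum_(t < m) vtens4 (u1 t) (u2 t) (u3 t) (u4 t) i j k l) ->
  contract A W W' = \sum_(t < m) mxpair W (r1mx (u1 t) (u2 t)) * mxpair W' (r1mx (u3 t) (u4 t)).
Proof.
move=> defA; rewrite (eq_contract _ _ defA) contract_sum; apply: eq_bigr => t _.
rewrite -contract_mxtens4; apply: eq_contract => i j k l.
by rewrite /vtens4 /mxtens4 !mxE !mulrA.
Qed.

Lemma contract_mdecomp r A (lam : 'I_r -> C) (E : 'I_r -> 'M[C]_n) W W' :
  (forall i j k l, A i j k l = \sum_(t < r) lam t * mxtens4 (E t) (cmxconj (E t)) i j k l) ->
  contract A W W' = \sum_(t < r) lam t * (mxpair W (E t) * mxpair W' (cmxconj (E t))).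
Proof.
move=> defA; rewrite (eq_contract _ _ defA) contract_sum; apply: eq_bigr => t _.
by rewrite (contractZ (lam t) (mxtens4 _ _)) contract_mxtens4.
Qed.

Lemma cp_decomp_card_leq (T : finType) k A (W W' : T -> 'M[C]_n) :
  cp_decomp k A -> (forall x y, contract A (W x) (W' y) = (x == y)%:R) -> (#|T| <= k)%N.
Proof.
move=> [u1 [u2 [u3 [u4 defA]]]] WW'1.
apply: (card_leq_factor_id (a := fun x t => mxpair (W x) (r1mx (u1 t) (u2 t)))
                           (b := fun t y => mxpair (W' y) (r1mx (u3 t) (u4 t)))) => x y.
by rewrite -(contract_cp _ _ defA) WW'1.
Qed.

Definition tswap23 (A : tensor4 C n) : tensor4 C n := fun i j k l => A i k j l.

Lemma cp_decomp_tswap23 k A : cp_decomp k A -> cp_decomp k (tswap23 A).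
Proof.
move=> [u1 [u2 [u3 [u4 defA]]]]; exists u1, u3, u2, u4 => i j k' l.
by rewrite /tswap23 defA; apply: eq_bigr => t _; rewrite /vtens4; ring.
Qed.

Lemma contract_tswap23_mxtens4 X Y f f' g g' :
  contract (tswap23 (mxtens4 X Y)) (r1mx f f') (r1mx g g')
  = mxpair (r1mx f g) X * mxpair (r1mx f' g') Y.
Proof.
rewrite !mxpair_r1mx /contract big_distrl; apply: eq_bigr => i _.
rewrite big_distrl exchange_big; apply: eq_bigr => k _.
rewrite big_distrr; apply: eq_bigr => j _.
rewrite big_distrr; apply: eq_bigr => l _.
by rewrite /tswap23 /mxtens4 !mxE /=; ring.
Qed.

Lemma cp_decomp_of_fin (T : finType) A (f1 f2 f3 f4 : T -> 'I_n -> C) :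
  (forall i j k l, A i j k l = \sum_(x : T) vtens4 (f1 x) (f2 x) (f3 x) (f4 x) i j k l) ->
  cp_decomp #|T| A.
Proof.
move=> defA; exists (f1 \o enum_val), (f2 \o enum_val), (f3 \o enum_val), (f4 \o enum_val).
move=> i j k l; rewrite defA.
exact: (big_enum_val (fun x => vtens4 (f1 x) (f2 x) (f3 x) (f4 x) i j k l)).
Qed.

Lemma cp_decomp_mdecomp r m A (lam : 'I_r -> C) (E : 'I_r -> 'M[C]_n) :
  (forall t, \rank (E t) <= m)%N ->
  (forall i j k l, A i j k l = \sum_(t < r) lam t * mxtens4 (E t) (cmxconj (E t)) i j k l) ->
  cp_decomp (r * m * m) A.
Proof.
move=> rkE defA.
pose U t : 'M[C]_(n, m) := col_ebase (E t) *m pid_mx (\rank (E t)).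
pose V t : 'M[C]_(m, n) := pid_mx (\rank (E t)) *m row_ebase (E t).
have EUV t : E t = U t *m V t by rewrite mulmx_ebase_pid.
have -> : (r * m * m)%N = #|{: 'I_r * 'I_m * 'I_m}| by rewrite !card_prod !card_ord.
apply: (cp_decomp_of_fin
  (f1 := fun x i => lam x.1.1 * U x.1.1 i x.1.2) (f2 := fun x j => V x.1.1 x.1.2 j)
  (f3 := fun x k => (U x.1.1 k x.2)^*) (f4 := fun x l => (V x.1.1 x.2 l)^*)) => i j k l.
rewrite defA -(sum_prod3 (fun t a b => vtens4 (fun i => lam t * U t i a) (V t a)
                             (fun k => (U t k b)^*) (fun l => (V t b l)^*) i j k l)).
apply: eq_bigr => t _.
rewrite /mxtens4 /cmxconj mxE EUV !mxE rmorph_sum big_distrl big_distrr.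
apply: eq_bigr => a _ /=; rewrite !big_distrr; apply: eq_bigr => b _ /=.
by rewrite /vtens4 rmorphM /=; ring.
Qed.

Lemma cp_rank_exists m A : cp_decomp m A -> exists k, is_cp_rank A k /\ (k <= m)%N.
Proof.
move=> Am; have [k [[Ak kmin] _]] := @dec_inh_nat_subset_has_unique_least_element
  (fun k => cp_decomp k A) (fun k => classic _) (ex_intro _ m Am).
by exists k; split; [split=> // k' /kmin/ssrnat.leP | apply/ssrnat.leP/kmin].
Qed.

Lemma mdecomp_leq_cp r m A (lam : 'I_r -> C) (E : 'I_r -> 'M[C]_n) :
  (forall t, lam t != 0) -> (forall s t, mxinner (E s) (E t) = (s == t)%:R) ->
  (forall i j k l, A i j k l = \sum_(t < r) lam t * mxtens4 (E t) (cmxconj (E t)) i j k l) ->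
  cp_decomp m A -> (r <= m)%N.
Proof.
move=> lam0 Eortho defA Ak; rewrite -[r]card_ord.
apply: (cp_decomp_card_leq (W := fun s => (lam s)^-1 *: cmxconj (E s)) (W' := E) Ak) => s t.
rewrite (contract_mdecomp _ _ defA) (bigD1 s) //= big1 => [|u /negbTE us].
  rewrite mxpairZl mxpair_conjl mxpair_conjr !Eortho eqxx mulr1 addr0.
  by rewrite mulrA mulfV // mul1r eq_sym.
by rewrite mxpairZl mxpair_conjl Eortho us mulr0 mul0r mulr0.
Qed.

Lemma mxtens4_leq_cp m A (lam : C) (E : 'M[C]_n) : lam != 0 ->
  (forall i j k l, A i j k l = lam * mxtens4 E (cmxconj E) i j k l) ->
  cp_decomp m A -> (\rank E * \rank E <= m)%N.
Proof.
move=> lam0 defA /cp_decomp_tswap23 Ak.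
have /row_fullP [P PEb] := col_base_full E.
have /row_freeP [Q bQ] := row_base_free E.
have PEQ : P *m E *m Q = 1%:M by rewrite -[X in P *m X]mulmx_base mulmxA PEb mul1mx bQ.
have <- : #|{: 'I_(\rank E) * 'I_(\rank E)}| = (\rank E * \rank E)%N.
  by rewrite card_prod card_ord.
apply: (cp_decomp_card_leq
  (W := fun x => r1mx (fun i => (lam^-1 *: P) x.1 i) (fun j => (P x.2 j)^*))
  (W' := fun y => r1mx (fun i => Q i y.1) (fun j => (Q j y.2)^*)) Ak) => [[a c] [b d]] /=.
have defA23 i j k l : tswap23 A i j k l = lam * tswap23 (mxtens4 E (cmxconj E)) i j k l.
  by rewrite /tswap23 defA.
rewrite (eq_contract _ _ defA23).
rewrite contractZ contract_tswap23_mxtens4 mxpair_r1mx_conj !mxpair_r1mx_mulmx.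
rewrite -!scalemxAl PEQ !mxE rmorph_nat mulrA mulrA mulfV // mul1r xpair_eqE.
by case: (a == b); case: (c == d); rewrite ?mul1r ?mul0r.
Qed.

Lemma mxinner_sym_rank1 (X Y : 'M[C]_n) a b f g :
  (forall i j, X i j = a * f i * f j) -> (forall i j, Y i j = b * g i * g j) ->
  mxinner X Y = a * b^* * (\sum_(i < n) f i * (g i)^*) ^+ 2.
Proof.
move=> defX defY; rewrite /mxinner expr2 big_distrl big_distrr; apply: eq_bigr => i _.
rewrite big_distrr big_distrr; apply: eq_bigr => j _ /=.
by rewrite defX defY !rmorphM /=; ring.
Qed.

Lemma mdecomp_rank1 r A (lam : 'I_r -> C) (E : 'I_r -> 'M[C]_n) :
  (forall t, lam t \is Num.real) -> (forall t, (E t)^T = E t) ->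
  (forall s t, mxinner (E s) (E t) = (s == t)%:R) ->
  (forall i j k l, A i j k l = \sum_(t < r) lam t * mxtens4 (E t) (cmxconj (E t)) i j k l) ->
  (forall t, \rank (E t) = 1%N) ->
  exists (lam' : 'I_r -> C) (p : 'I_r -> 'I_n -> C),
    (forall t, lam' t \is Num.real) /\
    (forall s t, s != t -> \sum_(k < n) (p s k)^* * p t k = 0) /\
    (forall i j k l, A i j k l =
       \sum_(t < r) lam' t * vtens4 (p t) (p t) (fun x => (p t x)^*) (fun x => (p t x)^*) i j k l).
Proof.
move=> lamR Esym Eortho defA rkE.
pose a t := projT1 (sym_rank1_mx (Esym t) (rkE t)).
pose v t := sval (projT2 (sym_rank1_mx (Esym t) (rkE t))).
have defE t : forall i j, E t i j = a t * v t i * v t j :=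
  svalP (projT2 (sym_rank1_mx (Esym t) (rkE t))).
have innerE s t := mxinner_sym_rank1 (defE s) (defE t).
have a0 t : a t != 0.
  by apply: contra_eqN (Eortho t t) => /eqP a0; rewrite innerE a0 !mul0r eqxx eq_sym oner_eq0.
exists (fun t => lam t * `|a t| ^+ 2), v; split; [|split].
- by move=> t; rewrite rpredM ?rpredX ?normr_real.
- move=> s t /negbTE st; have /eqP := Eortho s t.
  rewrite st innerE !mulf_eq0 conjC_eq0 (negbTE (a0 s)) (negbTE (a0 t)) /= orbb => /eqP vst.
  apply: etrans (_ : _ = (\sum_(i < n) v s i * (v t i)^*)^*) _; last by rewrite vst conjC0.
  by rewrite rmorph_sum; apply: eq_bigr => i _; rewrite rmorphM /= conjCK mulrC.
- move=> i j k l; rewrite defA; apply: eq_bigr => t _.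
  by rewrite /mxtens4 /vtens4 mxE !defE normCK !rmorphM /=; ring.
Qed.

End Contraction.

Theorem corollary4p8 (R : rcfType) (n r : nat) (A : tensor4 R[i] n)
  (lam : 'I_r -> R[i]) (E : 'I_r -> 'M[R[i]]_n) :
  CPS A ->
  is_rank_m A r ->
  (forall t, lam t \is Num.real) ->
  (forall t, lam t != 0) ->
  (forall t, (E t)^T = E t) ->
  (forall s t, mxinner (E s) (E t) = (s == t)%:R) ->
  (forall i j k l, A i j k l = \sum_(t < r) lam t * mxtens4 (E t) (cmxconj (E t)) i j k l) ->
  [/\
    ((forall t, \rank (E t) = 1%N) ->
      exists (lam' : 'I_r -> R[i]) (p : 'I_r -> 'I_n -> R[i]),
        (forall t, lam' t \is Num.real) /\
        (forall s t, s != t -> \sum_(k < n) (p s k)^* * p t k = 0) /\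
        (forall i j k l, A i j k l =
           \sum_(t < r) lam' t * vtens4 (p t) (p t) (fun x => (p t x)^*) (fun x => (p t x)^*) i j k l)),
    (exists k, is_cp_rank A k /\
       (r <= k <= r * (\max_(t < r) \rank (E t)) ^ 2)%N) &
    (r = 1%N -> forall t, is_cp_rank A (\rank (E t) ^ 2)%N) ].
Proof.
move=> _ _ lamR lam0 Esym Eortho defA; split.
- exact: mdecomp_rank1.
- have rkE t : (\rank (E t) <= \max_(t < r) \rank (E t))%N by exact: leq_bigmax.
  have [k [rkA kle]] := cp_rank_exists (cp_decomp_mdecomp rkE defA).
  exists k; split=> //; rewrite (mdecomp_leq_cp lam0 Eortho defA rkA.1).
  by rewrite -mulnn mulnA.
- move=> r1; subst r => t.
  have rkE t' : (\rank (E t') <= \rank (E t))%N by rewrite (ord1 t') (ord1 t).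
  have defA1 i j k l : A i j k l = lam t * mxtens4 (E t) (cmxconj (E t)) i j k l.
    by rewrite defA big_ord1 (ord1 t).
  rewrite -mulnn; split=> [|m]; last exact: mxtens4_leq_cp (lam0 t) defA1.
  by have := cp_decomp_mdecomp rkE defA; rewrite mul1n.
Qed.
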